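(* Fix $\varepsilon>0$ and $C>0$. There are constants $c_1,c_2>0$ (depending on $\varepsilon$ and $C$) and $n_0$ such that for all $n\ge n_0$ and all integers $2\le k\le Cn^{1/2-\varepsilon}$ there exist a length $m$ and a sequence $S\in[n]^m$ with $\mathit{WS}(S)\le c_1 m\log_2 k$ and ${\mathit LF}^k(S)\ge c_2 m\log_2(n/k)$.
   Context: Working set bound: for $S=(s_1,\dots,s_m)$ and $j\le m$, let $\rho(j)=\max\{i<j:s_i=s_j\}$, with $\rho(j)=0$ if there is no such $i$, and let $w_S(j)=\{s_i:\rho(j)<i\le j\}$. Then $\mathit{WS}(S)=\sum_{j=1}^m\log_2|w_S(j)|$. For a BST $T$, $d_T(a,b)$ is the number of edges on the path between $a$ and $b$. $k$-lazy finger bound: for a BST $T$ on $[n]$, a finger strategy consists of initial positions $\vec\ell\in[n]^k$ and assignments $\vec f\in[k]^m$, where finger $f_t$ serves $s_t$ and then sits at $s_t$. The cost is $\sum_t(1+d_T(s_t,\sigma(f_t,t)))$, where $\sigma(i,t)$ is the position of finger $i$ just before time $t$. ${\mathit LF}^k_T(S)$ is the minimum over strategies, and ${\mathit LF}^k(S)=\min_T{\mathit LF}^k_T(S)$ over BSTs $T$ on $[n]$. *)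

From mathcomp Require Import all_boot.
From Stdlib Require Import Reals.

Set Implicit Arguments.
Unset Strict Implicit.
Unset Printing Implicit Defensive.

Definition in_range (n : nat) (x : nat) : bool := (1 <= x <= n)%N.

Definition log2 (x : R) : R := (ln x / ln 2)%R.

(* Working set bound.  Positions are 0-indexed: S = s_0 ... s_{m-1}.   *)
(* For position j, the previous occurrence of s_j (if any) is the last *)
(* i < j with s_i = s_j; the window w_S(j) is the set of keys s_i with  *)
(* prev < i <= j (all i <= j if there is no previous occurrence).       *)

Definition ws_start (S : seq nat) (j : nat) : nat :=
  let pre := take j S in
  let x := nth 0%N S j in
  if x \in pre then (size pre - index x (rev pre))%N   (* = last occurrence + 1 *)
  else 0%N.

Definition ws_window (S : seq nat) (j : nat) : seq nat :=
  undup (drop (ws_start S j) (take j.+1 S)).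

Definition WS (S : seq nat) : R :=
  foldr Rplus 0%R
    (map (fun j => log2 (INR (size (ws_window S j)))) (iota 0 (size S))).

Inductive tree : Type :=
| Leaf : tree
| Node : tree -> nat -> tree -> tree.

Fixpoint inorder (t : tree) : seq nat :=
  match t with
  | Leaf => [::]
  | Node l x r => inorder l ++ x :: inorder r
  end.

(* A BST on [n]: a binary tree whose in-order key sequence is 1,2,...,n
   (so the keys are exactly [n], each once, in search-tree order). *)
Definition bst_on (n : nat) (t : tree) : Prop := inorder t = iota 1 n.

Fixpoint root_path (t : tree) (a : nat) : seq nat :=
  match t with
  | Leaf => [::]
  | Node l x r =>
      if a == x then [:: x]
      else if a \in inorder l then x :: root_path l a
      else if a \in inorder r then x :: root_path r a
      else [::]
  end.

Fixpoint lcp (s u : seq nat) : nat :=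
  match s, u with
  | x :: s', y :: u' => if x == y then (lcp s' u').+1 else 0%N
  | _, _ => 0%N
  end.

(* d_T(a,b): number of edges on the tree path between a and b
   = depth a + depth b - 2 depth(lca a b). *)
Definition dist (t : tree) (a b : nat) : nat :=
  (size (root_path t a) + size (root_path t b) - 2 * lcp (root_path t a) (root_path t b))%N.

(* k-lazy finger bound.  Fingers are 0..k-1; times are 0..m-1.          *)
(* l i  = initial position of finger i;  f t = finger serving s_t.      *)

(* sigma(i,t): position of finger i just before time t *)
Fixpoint finger_pos (S : seq nat) (f : nat -> nat) (l : nat -> nat)
    (i : nat) (t : nat) : nat :=
  match t with
  | 0 => l i
  | t'.+1 => if f t' == i then nth 0%N S t' else finger_pos S f l i t'
  end.

Definition finger_cost (t : tree) (S : seq nat) (f l : nat -> nat) : nat :=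
  (\sum_(0 <= u < size S) (1 + dist t (nth 0%N S u) (finger_pos S f l (f u) u)))%N.

Definition valid_strategy (n k : nat) (S : seq nat) (f l : nat -> nat) : Prop :=
  (forall i, (i < k)%N -> in_range n (l i)) /\
  (forall u, (u < size S)%N -> (f u < k)%N).

(* "LF^k(S) >= x", where LF^k(S) = min over BSTs T on [n] and over finger
   strategies of the cost; stated by unfolding the minimum:
   every BST and every strategy costs at least x. *)
Definition LF_ge (n k : nat) (S : seq nat) (x : R) : Prop :=
  forall (t : tree) (f l : nat -> nat),
    bst_on n t -> valid_strategy n k S f l -> (x <= INR (finger_cost t S f l))%R.

From Pilot Require Import Defs.
From mathcomp Require Import all_boot.
From Stdlib Require Import Reals.
From mathcomp Require Import zify.
From Stdlib Require Import Lra.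
(* Reals rebinds [^] on [nat]; bring back [expn]. *)
Import ssrnat.

Set Implicit Arguments.
Unset Strict Implicit.
Unset Printing Implicit Defensive.

(* The sequence consists of groups; group b makes n passes over an arithmetic
   progression of L = 2k keys, and distinct groups use distinct (first term,
   difference) pairs.  Outside its first pass every access repeats the access L
   steps earlier, so its working set has at most L keys and WS(S) = O(m log k).

   Call an access cheap if the finger serving it is at tree distance < e.  In one
   pass at most k accesses use a finger not yet used in that pass; every other
   cheap access yields two positions of the progression whose keys are at
   distance < e.  Two positions and their keys determine the group, and a BST on
   [n] has at most n e 2^e pairs of keys at distance < e.  With 4^e about
   n / (64 k^2), at most 3/4 of the accesses are cheap and the others cost more
   than e, while k <= C n^(1/2 - eps) gives e + 1 >= (eps/2) log2 n. *)

Fixpoint branch (t : tree) (a : nat) : seq bool :=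
  match t with
  | Leaf => [::]
  | Node l x r =>
      if a == x then [::]
      else if a \in inorder l then false :: branch l a
      else if a \in inorder r then true :: branch r a
      else [::]
  end.

Fixpoint descend (t : tree) (w : seq bool) : nat :=
  match t, w with
  | Leaf, _ => 0
  | Node _ x _, [::] => x
  | Node l _ _, false :: w' => descend l w'
  | Node _ _ r, true :: w' => descend r w'
  end.

Fixpoint prefix_size (T : eqType) (s u : seq T) : nat :=
  match s, u with
  | x :: s', y :: u' => if x == y then (prefix_size s' u').+1 else 0
  | _, _ => 0
  end.

Lemma prefix_size_leq (T : eqType) (s u : seq T) :
  prefix_size s u <= size s /\ prefix_size s u <= size u.
Proof.
elim: s u => [|x s IH] [|y u] //=; case: eqP => _ //; have [] := IH u; lia.
Qed.

Lemma take_prefix_size (T : eqType) (s u : seq T) :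
  take (prefix_size s u) s = take (prefix_size s u) u.
Proof. by elim: s u => [|x s IH] [|y u] //=; case: eqP => [->|_] //=; rewrite IH. Qed.

Lemma prefix_size_s0 (T : eqType) (s : seq T) : prefix_size s [::] = 0.
Proof. by case: s. Qed.

Lemma lcp_s1 x s : lcp s [:: x] <= 1.
Proof. by case: s => [|y [|z s]] //=; case: eqP. Qed.

Lemma lcp_1s x s : lcp [:: x] s <= 1.
Proof. by case: s => [|y s] //=; case: eqP. Qed.

Section BranchPaths.

Variables (l r : tree) (x a : nat).
Hypothesis a_in : a \in inorder (Node l x r).

Lemma branch_NodeE :
  branch (Node l x r) a =
  if a == x then [::] else if a \in inorder l then false :: branch l a
  else true :: branch r a.
Proof.
move: a_in; rewrite /= mem_cat in_cons.
by case: eqP => // _; case: (a \in inorder l) => //= ->.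
Qed.

Lemma root_path_NodeE :
  root_path (Node l x r) a =
  if a == x then [:: x] else if a \in inorder l then x :: root_path l a
  else x :: root_path r a.
Proof.
move: a_in; rewrite /= mem_cat in_cons.
by case: eqP => // _; case: (a \in inorder l) => //= ->.
Qed.

End BranchPaths.

Lemma descend_branch t a : a \in inorder t -> descend t (branch t a) = a.
Proof.
elim: t => [|l IHl x r IHr] // Ha; rewrite branch_NodeE //.
move: Ha; rewrite /= mem_cat in_cons.
by case: eqP => [->|_] //; case: ifP => [/IHl|_ /= /IHr].
Qed.

Lemma size_root_path t a :
  a \in inorder t -> size (root_path t a) = (size (branch t a)).+1.
Proof.
elim: t => [|l IHl x r IHr] // Ha; rewrite root_path_NodeE // branch_NodeE //.
move: Ha; rewrite /= mem_cat in_cons.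
by case: eqP => // _; case: ifP => [/IHl|_ /IHr] /= ->.
Qed.

Lemma head_root_path t a : a \in inorder t -> head 0 (root_path t a) \in inorder t.
Proof.
case: t => [|l x r] // Ha; rewrite root_path_NodeE //.
have xt : x \in inorder (Node l x r) by rewrite /= mem_cat mem_head orbT.
by case: eqP => _ //; case: ifP.
Qed.

Lemma lcp_head_neq s u : head 0 s != head 0 u -> lcp s u = 0.
Proof. by case: s u => [|x s] [|y u] //= /negbTE ->. Qed.

Lemma lcp_root_path_leq t a b :
  uniq (inorder t) -> a \in inorder t -> b \in inorder t ->
  lcp (root_path t a) (root_path t b) <= (prefix_size (branch t a) (branch t b)).+1.
Proof.
elim: t a b => [|l IHl x r IHr] a b // U Ha Hb.
have : uniq (inorder l ++ x :: inorder r) := U.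
rewrite cat_uniq => /and3P [Ul /norP [_ lr] /andP [_ Ur]].
have in_r y : y \in inorder (Node l x r) -> y != x -> y \notin inorder l ->
    y \in inorder r.
  by rewrite /= mem_cat in_cons => /or3P [-> | /eqP -> | ->] // /negP.
have apart y z : y \in inorder l -> z \in inorder r -> y != z.
  move=> yl zr; apply: (contraNneq _ lr) => eyz.
  by apply/hasP; exists z; rewrite // -eyz.
rewrite (root_path_NodeE Ha) (root_path_NodeE Hb) (branch_NodeE Ha) (branch_NodeE Hb).
case: (a =P x) => [_|/eqP nax]; first exact: lcp_1s.
case: (b =P x) => [_|/eqP nbx]; first by rewrite prefix_size_s0; exact: lcp_s1.
case: ifP => al; case: ifP => bl /=; rewrite eqxx ltnS.
- exact: IHl.
- rewrite lcp_head_neq //; apply: apart; first exact: head_root_path.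
  by apply: head_root_path; rewrite in_r // bl.
- rewrite lcp_head_neq // eq_sym; apply: apart; first exact: head_root_path.
  by apply: head_root_path; rewrite in_r // al.
- by apply: IHr; rewrite ?in_r ?al ?bl.
Qed.

Fixpoint short_words (e : nat) : seq (seq bool) :=
  if e is e'.+1 then [::] :: [seq b :: w | b <- [:: false; true], w <- short_words e']
  else [::].

Lemma size_short_words e : size (short_words e) < 2 ^ e.
Proof. by elim: e => [|e IH] //=; rewrite cats0 size_cat !size_map expnS; lia. Qed.

Lemma mem_short_words e w : size w < e -> w \in short_words e.
Proof.
elim: e w => [|e IH] [|b w] //= /IH Hw.
by rewrite in_cons; case: b; rewrite /= !mem_cat (map_f _ Hw) ?orbT.
Qed.

Lemma count_dist_lt t x e : uniq (inorder t) -> x \in inorder t ->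
  count (fun y => Defs.dist t x y < e) (inorder t) <= e * 2 ^ e.
Proof.
move=> U xt; rewrite -size_filter.
(* y is reached from x's branch by leaving it after one of its last e steps,
   then descending along fewer than e further bits *)
pose cand := [seq descend t (take c (branch t x) ++ w)
             | c <- iota (size (branch t x) + 1 - e) e, w <- short_words e].
apply: (@leq_trans (size cand)); last first.
  by rewrite size_allpairs size_iota leq_mul2l ltnW ?size_short_words ?orbT.
apply: uniq_leq_size; first exact: filter_uniq.
move=> y; rewrite mem_filter => /andP [dxy yt].
have := lcp_root_path_leq U xt yt.
move: dxy; rewrite /Defs.dist (size_root_path xt) (size_root_path yt).
have take_eq := take_prefix_size (branch t x) (branch t y).
set c := prefix_size _ _ in take_eq *; set L := lcp _ _ => dxy lcp_le.
have [c_x c_y] : c <= size (branch t x) /\ c <= size (branch t y) :=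
  prefix_size_leq _ _.
clearbody c L.
apply/allpairsP; exists (c, drop c (branch t y)) => /=; split.
- by rewrite mem_iota; lia.
- have : size (drop c (branch t y)) < e by rewrite size_drop; lia.
  exact: mem_short_words.
- by rewrite take_eq cat_take_drop descend_branch.
Qed.

Lemma count_close_pairs n t e : bst_on n t ->
  count (fun p : nat * nat => Defs.dist t p.1 p.2 < e)
        [seq (x, y) | x <- iota 1 n, y <- iota 1 n] <= n * (e * 2 ^ e).
Proof.
move=> tn; have U : uniq (inorder t) by rewrite tn iota_uniq.
suff count_sub s : {subset s <= inorder t} ->
    count (fun p : nat * nat => Defs.dist t p.1 p.2 < e)
          [seq (x, y) | x <- s, y <- inorder t] <= size s * (e * 2 ^ e).
  by rewrite -{3}(size_iota 1 n) -tn; apply: count_sub.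
elim: s => [|x s IH] //= sub_s.
rewrite count_cat count_map mulSn leq_add //.
  by apply: count_dist_lt; rewrite // sub_s ?mem_head.
by apply: IH => y ys; rewrite sub_s // in_cons ys orbT.
Qed.

Fixpoint last_use (f : nat -> nat) (i t : nat) : option nat :=
  if t is t'.+1 then (if f t' == i then Some t' else last_use f i t') else None.

Lemma finger_pos_last_use S f l i t :
  finger_pos S f l i t = if last_use f i t is Some v then nth 0 S v else l i.
Proof. by elim: t => [|t IH] //=; case: ifP. Qed.

Lemma last_use_Some f i t v : last_use f i t = Some v -> v < t /\ f v = i.
Proof.
elim: t => [|t IH] //=; case: ifP => [/eqP <- [<-] | _ /IH [vt <-]] //; split=> //.
exact: ltnW.
Qed.

Lemma last_use_geq f i t w :
  w < t -> f w = i -> exists2 v, last_use f i t = Some v & w <= v.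
Proof.
elim: t => [|t IH] //= wt fw; case: ifP => [_ | /eqP fti]; first by exists t.
have {}wt : w < t.
  by move: wt; rewrite ltnS leq_eqVlt => /predU1P [wt|] //; rewrite -wt fw in fti.
exact: IH.
Qed.

Definition index_pairs (L : nat) : seq (nat * nat) :=
  [seq (i, j) | i <- iota 0 L, j <- iota 0 L].

Section FingerPass.

Variables (t : tree) (S : seq nat) (f l : nat -> nat) (k e a L : nat).

Definition cheap (u : nat) : bool :=
  Defs.dist t (nth 0 S u) (finger_pos S f l (f u) u) < e.

(* the finger serving [u] has not served any earlier access of the pass *)
Definition fresh (u : nat) : bool :=
  if last_use f (f u) u is Some v then v < a else true.

Definition close_pair (key : nat -> nat) (p : nat * nat) : bool :=
  (p.1 < p.2) && (Defs.dist t (key p.2) (key p.1) < e).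

Lemma count_fresh_leq : (forall u, a <= u < a + L -> f u < k) ->
  count fresh (iota a L) <= k.
Proof.
move=> fk; rewrite -size_filter.
have f_inj : {in filter fresh (iota a L) &, injective f}.
  move=> u u'; rewrite !mem_filter !mem_iota => /andP [Fu Ru] /andP [Fu' Ru'] E.
  case: (ltngtP u u') => // lt_uu'.
  - have [v luv le_uv] := last_use_geq lt_uu' E.
    by move: Fu'; rewrite /fresh luv; lia.
  - have [v luv le_uv] := last_use_geq lt_uu' (esym E).
    by move: Fu; rewrite /fresh luv; lia.
rewrite -(size_map f) -(size_iota 0 k); apply: uniq_leq_size.
  by rewrite (map_inj_in_uniq f_inj) filter_uniq ?iota_uniq.
move=> z /mapP [u]; rewrite mem_filter mem_iota => /andP [_ Ru] ->.
by rewrite mem_iota fk.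
Qed.

Lemma count_cheap_reused_leq key :
  (forall o, o < L -> nth 0 S (a + o) = key o) ->
  count (predI cheap (predC fresh)) (iota a L)
    <= count (close_pair key) (index_pairs L).
Proof.
move=> Skey; rewrite -!size_filter.
pose prev u := if last_use f (f u) u is Some v then v else 0.
pose phi u := (prev u - a, u - a).
have phi_inj : {in filter (predI cheap (predC fresh)) (iota a L) &, injective phi}.
  move=> u u'; rewrite !mem_filter !mem_iota => /andP [_ Ru] /andP [_ Ru'] [_]; lia.
rewrite -(size_map phi); apply: uniq_leq_size.
  by rewrite (map_inj_in_uniq phi_inj) filter_uniq ?iota_uniq.
move=> z /mapP [u]; rewrite mem_filter mem_iota /= /fresh /prev.
case lu: last_use => [v|] /andP [/andP [Cu]] //; rewrite -leqNgt => av Ru ->.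
have [vu fv] := last_use_Some lu.
have Sv : nth 0 S v = key (v - a) by rewrite -Skey ?subnKC //; lia.
have Su : nth 0 S u = key (u - a) by rewrite -Skey ?subnKC //; lia.
rewrite /phi /prev lu mem_filter /close_pair /=; apply/andP; split.
  by move: Cu; rewrite /cheap finger_pos_last_use lu Sv Su => ->; rewrite andbT; lia.
by apply/allpairsP; exists (v - a, u - a); rewrite /= !mem_iota; split=> //; lia.
Qed.

Lemma count_cheap_pass_leq key :
  (forall o, o < L -> nth 0 S (a + o) = key o) ->
  (forall u, a <= u < a + L -> f u < k) ->
  count cheap (iota a L) <= k + count (close_pair key) (index_pairs L).
Proof.
move=> Skey fk.
have cheap_split : count cheap (iota a L)
    <= count fresh (iota a L) + count (predI cheap (predC fresh)) (iota a L).
  rewrite -count_predUI; apply: leq_trans (leq_addr _ _) ; apply: sub_count.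
  by move=> u /= ->; case: (fresh u).
exact: leq_trans cheap_split (leq_add (count_fresh_leq fk) (count_cheap_reused_leq Skey)).
Qed.

End FingerPass.

Definition ap_key (h b o : nat) : nat := (b %% h).+1 + (b %/ h).+1 * o.

(* Group [b < A * h] makes [r] passes over the [L]-term arithmetic progression
   [ap_key h b]; distinct groups have distinct (first term, difference). *)
Definition ap_seq (A h r L : nat) : seq nat :=
  mkseq (fun j => ap_key h (j %/ L %/ r) (j %% L)) (A * h * (r * L)).

Lemma size_ap_seq A h r L : size (ap_seq A h r L) = A * h * (r * L).
Proof. exact: size_mkseq. Qed.

Lemma pass_indexE b rho o r L : rho < r -> o < L ->
  let j := b * (r * L) + rho * L + o in
  [/\ j %/ L %/ r = b, j %/ L %% r = rho & j %% L = o].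
Proof.
move=> rho_r o_L /=.
have -> : (b * (r * L) + rho * L + o) %/ L = b * r + rho.
  by rewrite mulnA -mulnDl divnMDl ?divn_small ?addn0 //; lia.
split; last by rewrite mulnA -mulnDl modnMDl modn_small.
- by rewrite divnMDl ?divn_small ?addn0 //; lia.
- by rewrite modnMDl modn_small.
Qed.

Lemma pass_index_decomp j r L : j = j %/ L %/ r * (r * L) + j %/ L %% r * L + j %% L.
Proof. by rewrite mulnA -mulnDl -!divn_eq. Qed.

Lemma pass_index_lt b rho o N r L : b < N -> rho < r -> o < L ->
  b * (r * L) + rho * L + o < N * (r * L).
Proof.
move=> bN rho_r o_L; rewrite -addnA.
have pass_lt : rho * L + o < r * L.
  apply: leq_trans (_ : rho.+1 * L <= r * L); last by rewrite leq_mul2r rho_r orbT.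
  by rewrite mulSnr ltn_add2l.
apply: leq_trans (_ : b.+1 * (r * L) <= N * (r * L)); last by rewrite leq_mul2r bN orbT.
by rewrite mulSnr ltn_add2l.
Qed.

Lemma nth_ap_seq A h r L b rho o : b < A * h -> rho < r -> o < L ->
  nth 0 (ap_seq A h r L) (b * (r * L) + rho * L + o) = ap_key h b o.
Proof.
move=> bN rho_r o_L; have [Eb _ Eo] := pass_indexE b rho_r o_L.
by rewrite nth_mkseq ?Eb ?Eo //; apply: pass_index_lt.
Qed.

Lemma ap_key_inj h i j b b' : 0 < h -> i < j ->
  ap_key h b j = ap_key h b' j -> ap_key h b i = ap_key h b' i -> b = b'.
Proof.
rewrite /ap_key => h0 ij Ej Ei.
have Ediff : (b %/ h).+1 * (j - i) = (b' %/ h).+1 * (j - i) by rewrite !mulnBr; lia.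
have ji0 : 0 < j - i by rewrite subn_gt0.
have Ed : b %/ h = b' %/ h by apply/succn_inj/eqP; rewrite -(eqn_pmul2r ji0) Ediff.
have Em : b %% h = b' %% h by move: Ei; rewrite Ed; lia.
by rewrite (divn_eq b h) (divn_eq b' h) Ed Em.
Qed.

Lemma ap_key_in_range n A h L b o : 0 < h -> b < A * h -> o < L -> h + A * L <= n ->
  in_range n (ap_key h b o).
Proof.
rewrite /in_range /ap_key => h0 bN o_L hAL; rewrite addSn /=.
have : b %% h < h by rewrite ltn_pmod.
have : (b %/ h).+1 <= A by rewrite ltn_divLR.
nia.
Qed.

Lemma ap_seq_in_range n A h r L : 0 < h -> 0 < r -> 0 < L -> h + A * L <= n ->
  all (in_range n) (ap_seq A h r L).
Proof.
move=> h0 r0 L0 hAL; apply/allP => x /mapP [j]; rewrite mem_iota add0n => /andP [_ jN] ->.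
apply: (ap_key_in_range h0) hAL; last by rewrite ltn_mod.
by rewrite !ltn_divLR // -mulnA.
Qed.

Lemma nth_ap_seq_sub_pass A h r L j : j < A * h * (r * L) -> j %/ L %% r != 0 ->
  L <= j /\ nth 0 (ap_seq A h r L) (j - L) = nth 0 (ap_seq A h r L) j.
Proof.
move=> jN rho0; rewrite [in RHS](pass_index_decomp j r L).
have r0 : 0 < r by case: (posnP r) jN => [->|//]; rewrite mul0n muln0.
have L0 : 0 < L by case: (posnP L) jN => [->|//]; rewrite !muln0.
have bN : j %/ L %/ r < A * h by rewrite !ltn_divLR // -mulnA.
have rho_r : j %/ L %% r < r by rewrite ltn_mod.
have o_L : j %% L < L by rewrite ltn_mod.
have Ej : j - L = j %/ L %/ r * (r * L) + (j %/ L %% r).-1 * L + j %% L.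
  rewrite {1}(pass_index_decomp j r L); move: rho0; rewrite -lt0n; case: (_ %% r) => //= rho _.
  by rewrite mulSn addnCA -addnA addKn.
split; first by rewrite -divn_gt0 // lt0n; apply: contraNneq rho0 => ->; rewrite mod0n.
rewrite Ej !nth_ap_seq //; exact: leq_ltn_trans (leq_pred _) rho_r.
Qed.

Lemma count_iota_blocks (p : pred nat) a N c (F : nat -> nat) :
  (forall i, i < N -> count p (iota (a + i * c) c) <= F i) ->
  count p (iota a (N * c)) <= \sum_(0 <= i < N) F i.
Proof.
elim: N => [|N IH] H; first by rewrite big_geq.
rewrite big_nat_recr //= mulSnr iotaD count_cat leq_add // ?H //.
by apply: IH => i iN; apply: H; apply: ltnW.
Qed.

Lemma count_iota_passes (p : pred nat) N r L (F : nat -> nat -> nat) :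
  (forall b rho, b < N -> rho < r ->
     count p (iota (b * (r * L) + rho * L) L) <= F b rho) ->
  count p (iota 0 (N * (r * L))) <= \sum_(0 <= b < N) \sum_(0 <= rho < r) F b rho.
Proof.
move=> H; apply: count_iota_blocks => b bN; rewrite add0n.
by apply: count_iota_blocks => rho rho_r; apply: H.
Qed.

Lemma count_first_pass N r L : 0 < r ->
  count (fun j => j %/ L %% r == 0) (iota 0 (N * (r * L))) <= N * L.
Proof.
move=> r0.
apply: leq_trans (_ : _ <= \sum_(0 <= b < N) \sum_(0 <= rho < r) (rho == 0) * L) _.
  apply: count_iota_passes => b rho bN rho_r.
  case: eqP => [_|rho_n0]; first by rewrite mul1n (leq_trans (count_size _ _)) ?size_iota.
  rewrite mul0n leqn0; apply/eqP; rewrite (eq_in_count (a2 := pred0)) ?count_pred0 //.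
  move=> u; rewrite mem_iota => /andP [lo hi].
  have o_L : u - (b * (r * L) + rho * L) < L by lia.
  have [_ rhoE _] := pass_indexE b rho_r o_L.
  by rewrite /= -(subnKC lo) rhoE; apply/negbTE/eqP.
rewrite (eq_bigr (fun _ => L)) ?sum_nat_const_nat ?subn0 // => b _.
rewrite big_ltn // eqxx mul1n big_nat_cond big1 ?addn0 // => rho.
by case/andP => /andP [rho_gt0 _] _; rewrite eqn0Ngt rho_gt0.
Qed.

Lemma size_ws_window_le n S j : all (in_range n) S -> size (ws_window S j) <= n.
Proof.
move=> Sn; rewrite -(size_iota 1 n); apply: uniq_leq_size; first exact: undup_uniq.
move=> x; rewrite mem_undup => /mem_drop /mem_take xS.
by move/allP: Sn => /(_ x xS); rewrite mem_iota /in_range; lia.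
Qed.

(* the previous occurrence of [s_j] is at position [j - L] or later *)
Lemma size_ws_window_le_period S j L : 0 < L <= j -> j < size S ->
  nth 0 S (j - L) = nth 0 S j -> size (ws_window S j) <= L.
Proof.
move=> /andP [L0 Lj] jS E; rewrite /ws_window /ws_start.
set pre := take j S; set x := nth 0 S j.
have pre_j : size pre = j by rewrite size_take jS.
have x_pre : nth 0 pre (j - L) = x by rewrite nth_take ?E //; lia.
have -> : x \in pre by rewrite -x_pre mem_nth // pre_j; lia.
have : index x (rev pre) <= L - 1.
  have <- : nth 0 (rev pre) (L - 1) = x.
    by rewrite nth_rev pre_j -?x_pre; [congr nth; lia | lia].
  by apply: index_nth; rewrite size_rev pre_j; lia.
by move=> idx; apply: leq_trans (size_undup _) _; rewrite size_drop size_take pre_j; case: ifP; lia.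
Qed.

Lemma sum_count_exchange (I J : Type) (s : seq I) (u : seq J) (P : I -> J -> bool) :
  \sum_(i <- s) count (P i) u = \sum_(j <- u) count (P^~ j) s.
Proof.
under eq_bigr do rewrite -sum1_count big_mkcond.
by rewrite exchange_big; apply: eq_bigr => j _; rewrite -sum1_count [RHS]big_mkcond.
Qed.

Lemma count_close_groups_leq n t e A h L i j : 0 < h -> h + A * L <= n -> i < L -> j < L ->
  count (fun b => close_pair t e (ap_key h b) (i, j)) (iota 0 (A * h))
    <= count (fun p : nat * nat => Defs.dist t p.1 p.2 < e)
             [seq (x, y) | x <- iota 1 n, y <- iota 1 n].
Proof.
move=> h0 hAL iL jL; rewrite -!size_filter.
pose phi b := (ap_key h b j, ap_key h b i).
have phi_inj : {in filter (fun b => close_pair t e (ap_key h b) (i, j)) (iota 0 (A * h)) &,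
    injective phi}.
  move=> b b'; rewrite mem_filter => /andP [/andP [/= ij _] _] _ Ebb'.
  by apply: (ap_key_inj h0 ij); [apply: (congr1 fst Ebb') | apply: (congr1 snd Ebb')].
rewrite -(size_map phi); apply: uniq_leq_size.
  by rewrite (map_inj_in_uniq phi_inj) filter_uniq ?iota_uniq.
move=> z /mapP [b]; rewrite mem_filter mem_iota add0n => /andP [/andP [_ close] /= bN] ->.
rewrite mem_filter close; apply/allpairsP; exists (phi b); rewrite /= !mem_iota.
have /andP [i1 in_] := ap_key_in_range h0 bN iL hAL.
have /andP [j1 jn] := ap_key_in_range h0 bN jL hAL.
by split=> //; apply/andP; split; lia.
Qed.

Lemma count_cheap_ap_seq n k e A h r L t f l :
  0 < h -> h + A * L <= n -> bst_on n t -> valid_strategy n k (ap_seq A h r L) f l ->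
  count (cheap t (ap_seq A h r L) f l e) (iota 0 (A * h * (r * L)))
    <= r * (A * h * k) + r * (L * L * (n * (e * 2 ^ e))).
Proof.
move=> h0 hAL tn [_ fk].
pose cl b := count (close_pair t e (ap_key h b)) (index_pairs L).
apply: leq_trans (_ : _ <= \sum_(0 <= b < A * h) \sum_(0 <= rho < r) (k + cl b)) _.
  apply: count_iota_passes => b rho bN rho_r.
  apply: count_cheap_pass_leq => [o o_L | u /andP [lo hi]]; first exact: nth_ap_seq.
  apply: fk; rewrite size_ap_seq -(subnKC lo); apply: pass_index_lt => //; lia.
under eq_bigr do rewrite sum_nat_const_nat subn0.
rewrite -big_distrr big_split sum_nat_const_nat subn0 /= -mulnDr leq_mul2l leq_add2l.
apply/orP; right; rewrite /cl sum_count_exchange.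
apply: leq_trans (_ : _ <= \sum_(p <- index_pairs L) n * (e * 2 ^ e)) _.
  rewrite big_seq_cond [leqRHS]big_seq_cond; apply: leq_sum => p /andP [pL _].
  move/allpairsP: pL => [[i j] [/=]]; rewrite !mem_iota !add0n => iL jL ->.
  rewrite /index_iota subn0.
  exact: leq_trans (count_close_groups_leq t e h0 hAL iL jL) (count_close_pairs e tn).
by rewrite big_const_seq count_predT iter_addn_0 size_allpairs size_iota mulnC.
Qed.

Lemma finger_cost_geq_expensive t S f l e :
  (e + 1) * count (predC (cheap t S f l e)) (iota 0 (size S)) <= finger_cost t S f l.
Proof.
rewrite /finger_cost /index_iota subn0 -sum1_count big_distrr big_mkcond /=.
by apply: leq_sum => u _; rewrite /cheap; case: ltnP => /=; lia.
Qed.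

Lemma finger_cost_ap_seq n k e A h r t f l :
  0 < h -> h + A * (2 * k) <= n -> 8 * k * (n * (e * 2 ^ e)) <= A * h ->
  bst_on n t -> valid_strategy n k (ap_seq A h r (2 * k)) f l ->
  (e + 1) * size (ap_seq A h r (2 * k)) <= 4 * finger_cost t (ap_seq A h r (2 * k)) f l.
Proof.
move=> h0 hAL rare tn sv; set S := ap_seq A h r (2 * k).
have := finger_cost_geq_expensive t S f l e.
have := count_predC (cheap t S f l e) (iota 0 (size S)).
have := count_cheap_ap_seq e h0 hAL tn sv; rewrite -/S size_iota size_ap_seq.
set m := A * h * _; set c := count (cheap _ _ _ _ _) _; set X := n * _ in rare *.
move=> cheap_few.
have cheap_le : 4 * c <= 3 * m.
  have : 2 * k * (8 * k * X) <= 2 * k * (A * h) by rewrite leq_mul2l rare orbT.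
  rewrite /m; nia.
nia.
Qed.

Lemma mul_exp2_le_exp4 e : e * 2 ^ e <= 4 ^ e.
Proof.
have -> : 4 ^ e = 2 ^ e * 2 ^ e by rewrite -expnMn.
by rewrite leq_mul2r (ltnW (ltn_expl e (isT : 1 < 2))) orbT.
Qed.

(* [e] is the largest exponent with [4 ^ e <= A h / (8 k n)], roughly [n / (64 k^2)]. *)
Lemma ap_params n k : 2 <= k -> 4 * k <= n ->
  let A := n %/ (4 * k) in let h := n %/ 2 in
  let e := trunc_log 4 (A * h %/ (8 * k * n)) in
  [/\ 0 < A, 0 < h, h + A * (2 * k) <= n,
      8 * k * (n * (e * 2 ^ e)) <= A * h & n < k * k * 2 ^ (2 * e + 10)].
Proof.
move=> k2 kn A h e.
have e_le : e * 2 ^ e <= A * h %/ (8 * k * n).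
  case: (posnP (A * h %/ (8 * k * n))) => [Q0 | Q_gt0]; first by rewrite /e Q0 trunc_log0.
  by apply: leq_trans (mul_exp2_le_exp4 e) _; apply: trunc_logP.
have e_gt : A * h %/ (8 * k * n) < 4 ^ e.+1 := trunc_log_ltn _ (isT : 1 < 4).
have A_le : A * (4 * k) <= n := leq_divM n (4 * k).
have A_gt : n < A.+1 * (4 * k) by apply: ltn_ceil; lia.
have h_le : h * 2 <= n := leq_divM n 2.
have h_gt : n < h.+1 * 2 := ltn_ceil n (isT : 0 < 2).
have Q_le := leq_divM (A * h) (8 * k * n).
have Q_gt : A * h < (A * h %/ (8 * k * n)).+1 * (8 * k * n) by apply: ltn_ceil; nia.
clearbody A h e; move: e_le e_gt Q_le Q_gt; set Q := A * h %/ _ => e_le e_gt Q_le Q_gt.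
clearbody Q.
have A0 : 0 < A by case: (posnP A) A_gt => // ->; lia.
have h0 : 0 < h by case: (posnP h) h_gt => // ->; lia.
split=> //.
- by move: A_le h_le; rewrite mulnCA; lia.
- by apply: leq_trans Q_le; rewrite [Q * _]mulnC mulnA leq_mul2l e_le orbT.
- have nA : n < 8 * k * A.
    apply: (leq_trans A_gt); rewrite (_ : 8 * k * A = 2 * A * (4 * k)); last lia.
    by rewrite leq_mul2r; apply/orP; right; lia.
  have nh : n < 4 * h by lia.
  have AhZ : A * h < 4 ^ e.+1 * (8 * k * n).
    by apply: (leq_trans Q_gt); rewrite leq_mul2r e_gt orbT.
  rewrite -(ltn_pmul2r (_ : 0 < n)); last lia.
  apply: leq_trans (ltn_mul nA nh) _.
  rewrite (_ : 8 * k * A * (4 * h) = 32 * k * (A * h)); last lia.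
  apply: leq_trans (_ : 32 * k * (4 ^ e.+1 * (8 * k * n)) <= _).
    by rewrite leq_mul2l (ltnW AhZ) orbT.
  have -> : 2 ^ (2 * e + 10) = 2 ^ 8 * 4 ^ e.+1.
    by rewrite (_ : 2 * e + 10 = 8 + 2 * e.+1) ?expnD ?expnM //; lia.
  lia.
Qed.

Open Scope R_scope.

Lemma INR_addn a b : INR (a + b)%N = INR a + INR b.
Proof. exact: plus_INR. Qed.

Lemma INR_muln a b : INR (a * b)%N = INR a * INR b.
Proof. exact: mult_INR. Qed.

Lemma INR_expn a m : INR (a ^ m)%N = INR a ^ m.
Proof. by elim: m => [|m IH]; rewrite ?expn0 // expnS INR_muln IH. Qed.

Lemma INR_2 : INR 2 = 2.
Proof. by rewrite /=; lra. Qed.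

Lemma INR_4 : INR 4 = 4.
Proof. by rewrite /=; lra. Qed.

Lemma INR_ge1 n : (0 < n)%N -> 1 <= INR n.
Proof. by case: n => // n _; rewrite S_INR; have := pos_INR n; lra. Qed.

Lemma ln_le x y : 0 < x -> x <= y -> ln x <= ln y.
Proof.
move=> x0 /Rle_lt_or_eq_dec [xy|<-]; last exact: Rle_refl.
exact/Rlt_le/ln_increasing.
Qed.

Lemma ln2_gt0 : 0 < ln 2.
Proof. by have := ln_lt_2; lra. Qed.

Lemma log2_le x y : 0 < x -> x <= y -> log2 x <= log2 y.
Proof.
move=> x0 xy; apply: Rmult_le_compat_r; last exact: ln_le.
by apply/Rlt_le/Rinv_0_lt_compat/ln2_gt0.
Qed.

(* Stdlib's [ln] is [0] outside the positive reals. *)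
Lemma ln_0 : ln 0 = 0.
Proof. by rewrite /ln; case: Rlt_dec => // lt00; case: (Rlt_irrefl 0). Qed.

Lemma log2_0 : log2 0 = 0.
Proof. by rewrite /log2 ln_0 /Rdiv Rmult_0_l. Qed.

Lemma log2_INR_le w B : (w <= B)%N -> log2 (INR w) <= log2 (INR B).
Proof.
case: w => [|w] wB; last by apply: log2_le; [apply: lt_0_INR; lia | apply/le_INR/leP].
rewrite /= log2_0 /log2 /Rdiv; apply: Rmult_le_pos.
  case: B {wB} => [|B]; first by rewrite ln_0; apply: Rle_refl.
  by rewrite -ln_1; apply: ln_le; [lra | apply: INR_ge1].
by apply/Rlt_le/Rinv_0_lt_compat/ln2_gt0.
Qed.

Lemma log2_INR_ge0 B : 0 <= log2 (INR B).
Proof. by have := log2_INR_le (leq0n B); rewrite /= log2_0. Qed.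

Lemma log2_INR_le_INR n : log2 (INR n) <= INR n.
Proof.
case: n => [|n]; first by rewrite /= log2_0; apply: Rle_refl.
have n0 : 0 < INR n.+1 by apply: lt_0_INR; lia.
have pow2_ge : INR n.+1 <= 2 ^ n.+1.
  elim: n.+1 => [|m IH]; first by rewrite /=; lra.
  have : 1 <= 2 ^ m by apply: pow_R1_Rle; lra.
  by rewrite S_INR /=; lra.
have := ln_le n0 pow2_ge; rewrite ln_pow; last lra.
rewrite /log2 /Rdiv => ln_le_n.
apply: (Rmult_le_reg_r (ln 2)); first exact: ln2_gt0.
by rewrite Rmult_assoc Rinv_l; [lra | apply/Rgt_not_eq/ln2_gt0].
Qed.

Lemma log2_2 : log2 2 = 1.
Proof. by rewrite /log2 /Rdiv Rinv_r //; apply/Rgt_not_eq/ln2_gt0. Qed.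

Lemma log2_double k : (0 < k)%N -> log2 (INR (2 * k)) = 1 + log2 (INR k).
Proof.
move=> k0; have k0R : 0 < INR k by apply: lt_0_INR; lia.
rewrite INR_muln INR_2 /log2 ln_mult ?Rdiv_plus_distr; [|lra|exact: k0R].
by rewrite -/(log2 2) log2_2.
Qed.

Lemma foldr_Rplus_le (s : seq nat) (F G : nat -> R) :
  (forall j, j \in s -> F j <= G j) ->
  foldr Rplus 0 (map F s) <= foldr Rplus 0 (map G s).
Proof.
elim: s => [|x s IH] FG /=; first exact: Rle_refl.
apply: Rplus_le_compat; first by apply: FG; rewrite mem_head.
by apply: IH => j js; apply: FG; rewrite in_cons js orbT.
Qed.

Lemma foldr_Rplus_cond (s : seq nat) (p : pred nat) c d :
  foldr Rplus 0 (map (fun j => c + (if p j then d else 0)) s) =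
  INR (size s) * c + INR (count p s) * d.
Proof.
elim: s => [|x s IH]; first by rewrite /=; lra.
rewrite [foldr _ _ _]/= IH (_ : size (x :: s) = (size s).+1) // S_INR.
rewrite (_ : count p (x :: s) = (p x + count p s)%N) // INR_addn.
by case: (p x) => /=; lra.
Qed.

Lemma WS_ap_seq_le n A h L : (0 < h)%N -> (0 < n)%N -> (0 < L)%N -> (h + A * L <= n)%N ->
  WS (ap_seq A h n L) <= INR (size (ap_seq A h n L)) * (log2 (INR L) + 1).
Proof.
move=> h0 n0 L0 hAL; have Sn := ap_seq_in_range h0 n0 L0 hAL.
pose first_pass j := (j %/ L %% n == 0)%N.
rewrite /WS; set G := fun j => log2 (INR L) + (if first_pass j then INR n else 0).
apply: Rle_trans (foldr_Rplus_le (G := G) _) _.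
  move=> j; rewrite mem_iota add0n => /andP [_ jm]; rewrite /G /first_pass.
  case: ifP => [_ | /negbT later_pass].
    have := log2_INR_le (size_ws_window_le j Sn); have := log2_INR_le_INR n.
    by have := log2_INR_ge0 L; lra.
  move: jm; rewrite size_ap_seq => jm.
  have [Lj E] := nth_ap_seq_sub_pass jm later_pass.
  have := log2_INR_le (size_ws_window_le_period (ltac:(lia) : (0 < L <= j)%N) _ E).
  by rewrite size_ap_seq => /(_ jm); lra.
rewrite foldr_Rplus_cond size_iota size_ap_seq.
have : INR (count first_pass (iota 0 (A * h * (n * L)))) <= INR (A * h * L).
  exact/le_INR/leP/count_first_pass.
rewrite (_ : (A * h * (n * L) = A * h * L * n)%N) ?INR_muln; last lia.
by have := pos_INR (A * h * L); have := pos_INR n; nra.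
Qed.

Lemma log2_double_add1_le k : (2 <= k)%N -> log2 (INR (2 * k)) + 1 <= 3 * log2 (INR k).
Proof.
move=> k2; rewrite log2_double; last lia.
have : log2 (INR 2) <= log2 (INR k) := log2_INR_le k2.
by rewrite INR_2 log2_2; lra.
Qed.

Lemma log2_div_le n k : (0 < n)%N -> (0 < k)%N -> log2 (INR n / INR k) <= log2 (INR n).
Proof.
move=> n0 k0; have nR := lt_0_INR n (ltP n0); have kR := INR_ge1 k0.
apply: log2_le; first by apply: Rdiv_lt_0_compat; lra.
rewrite -{2}[INR n]Rmult_1_r; apply: Rmult_le_compat_l; first lra.
by rewrite -Rinv_1; apply: Rinv_le_contravar; lra.
Qed.

Lemma LF_ge_le n k S x y : LF_ge n k S y -> x <= y -> LF_ge n k S x.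
Proof. by move=> Sy xy t f l tn sv; apply: Rle_trans xy (Sy t f l tn sv). Qed.

Lemma LF_ge_ap_seq n k e A h r : (0 < h)%N -> (h + A * (2 * k) <= n)%N ->
  (8 * k * (n * (e * 2 ^ e)) <= A * h)%N ->
  LF_ge n k (ap_seq A h r (2 * k)) (INR (e + 1) / 4 * INR (size (ap_seq A h r (2 * k)))).
Proof.
move=> h0 hAL rare t f l tn sv.
have := le_INR _ _ (leP (finger_cost_ap_seq h0 hAL rare tn sv)).
by rewrite !INR_muln INR_4; lra.
Qed.

Lemma ln_INR_eventually_gt T : exists2 n0, (0 < n0)%N & forall n, (n0 <= n)%N -> T < ln (INR n).
Proof.
have [n0 n0T] := INR_archimed 1 (exp T) Rlt_0_1; rewrite Rmult_1_r in n0T.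
exists n0.+1 => // n n0n; rewrite -[T]ln_exp; apply: ln_increasing; first exact: exp_pos.
by apply: Rlt_le_trans n0T _; apply/le_INR/leP/ltnW.
Qed.

Lemma ln_k_le eps C n k : 0 < C -> (0 < k)%N ->
  INR k <= C * Rpower (INR n) (1/2 - eps) -> ln (INR k) <= ln C + (1/2 - eps) * ln (INR n).
Proof.
move=> C0 k0 kC; rewrite -[(1/2 - eps) * _]ln_exp -ln_mult //; last exact: exp_pos.
by apply: ln_le => //; apply: lt_0_INR; lia.
Qed.

Lemma four_k_le_n eps C n k : 0 < eps -> 0 < C -> (0 < k)%N -> (0 < n)%N ->
  INR k <= C * Rpower (INR n) (1/2 - eps) -> 2 * (ln 4 + ln C) <= ln (INR n) ->
  (4 * k <= n)%N.
Proof.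
move=> eps0 C0 k0 n0 kC n_large; have lnk := ln_k_le C0 k0 kC.
have lnn0 : 0 <= ln (INR n) by rewrite -ln_1; apply: ln_le; [lra | exact: INR_ge1].
have kR : 0 < INR k by apply: lt_0_INR; lia.
have ln4k : ln (INR (4 * k)) <= ln (INR n).
  rewrite INR_muln INR_4 ln_mult //; last lra.
  by have := Rmult_le_pos _ _ (Rlt_le _ _ eps0) lnn0; lra.
case: (leqP (4 * k) n) => // /ltP /lt_INR n_lt.
by have := ln_increasing _ _ (lt_0_INR _ (ltP n0)) n_lt; lra.
Qed.

Lemma log2_le_e eps C n k e : 0 < eps -> 0 < C -> (0 < k)%N -> (0 < n)%N ->
  INR k <= C * Rpower (INR n) (1/2 - eps) -> (n < k * k * 2 ^ (2 * e + 10))%N ->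
  2 * (4 * ln 2 + ln C) / eps <= ln (INR n) -> eps / 2 * log2 (INR n) <= INR (e + 1).
Proof.
move=> eps0 C0 k0 n0 kC n_lt n_large; have lnk := ln_k_le C0 k0 kC.
have nR : 0 < INR n by apply: lt_0_INR; lia.
have kR : 0 < INR k by apply: lt_0_INR; lia.
have ln2 := ln2_gt0.
have two_pow : 0 < 2 ^ (2 * e + 10) by apply: pow_lt; lra.
have lnN : ln (INR (k * k * 2 ^ (2 * e + 10))) = 2 * ln (INR k) + (2 * INR (e + 1) + 8) * ln 2.
  rewrite !INR_muln INR_expn INR_2 ln_mult; [|nra|exact: two_pow].
  rewrite ln_mult // ln_pow; last lra.
  by rewrite INR_addn INR_muln INR_addn INR_2 /=; lra.
have := ln_increasing _ _ nR (lt_INR _ _ (ltP n_lt)); rewrite lnN => lnn.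
have eps_lnn : 4 * ln 2 + ln C <= eps * ln (INR n) / 2.
  have := Rmult_le_compat_r (eps / 2) _ _ (ltac:(lra) : 0 <= eps / 2) n_large.
  by rewrite (_ : 2 * (4 * ln 2 + ln C) / eps * (eps / 2) = 4 * ln 2 + ln C); [lra | field; lra].
apply: (Rmult_le_reg_r (ln 2)) => //.
by rewrite /log2 (_ : eps / 2 * (ln (INR n) / ln 2) * ln 2 = eps * ln (INR n) / 2); [nra | field; lra].
Qed.

Close Scope R_scope.

Theorem mainTheorem14 (eps C : R) (Heps : (0 < eps)%R) (HC : (0 < C)%R) :
  exists c1 c2 : R, (0 < c1)%R /\ (0 < c2)%R /\
  exists n0 : nat, forall n k : nat,
    (n0 <= n)%N -> (2 <= k)%N ->
    (INR k <= C * Rpower (INR n) (1/2 - eps))%R ->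
    exists S : seq nat,
      (0 < size S)%N /\ all (in_range n) S /\
      (WS S <= c1 * INR (size S) * log2 (INR k))%R /\
      LF_ge n k S (c2 * INR (size S) * log2 (INR n / INR k))%R.
Proof.
exists 3%R, (eps / 8)%R; split; first lra; split; first lra.
have [n0 n0_gt0 n_large] :=
  ln_INR_eventually_gt (Rmax (2 * (ln 4 + ln C)) (2 * (4 * ln 2 + ln C) / eps)).
exists n0 => n k n0n k2 kC.
have n_gt0 : 0 < n := leq_trans n0_gt0 n0n.
have k_gt0 : 0 < k := ltnW k2.
have [/Rlt_le n_large1 /Rlt_le n_large2] := proj1 (Rmax_Rlt _ _ _) (n_large n n0n).
have [A0 h0 hAL rare n_lt] := ap_params k2 (four_k_le_n Heps HC k_gt0 n_gt0 kC n_large1).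
have e_large := log2_le_e Heps HC k_gt0 n_gt0 kC n_lt n_large2.
exists (ap_seq (n %/ (4 * k)) (n %/ 2) n (2 * k)).
set S := ap_seq _ _ _ _; have m0 := pos_INR (size S).
split; [|split; [|split]].
- by rewrite size_ap_seq !muln_gt0 A0 h0 n_gt0 /=; lia.
- by apply: ap_seq_in_range => //; lia.
- apply: Rle_trans (WS_ap_seq_le h0 n_gt0 _ hAL) _; first lia.
  rewrite -/S [(3 * _)%R]Rmult_comm Rmult_assoc.
  exact: Rmult_le_compat_l m0 (log2_double_add1_le k2).
- apply: LF_ge_le (LF_ge_ap_seq h0 hAL rare) _; rewrite -/S.
  have epsm0 : (0 <= eps / 8 * INR (size S))%R by apply: Rmult_le_pos; lra.
  by have := Rmult_le_compat_l _ _ _ epsm0 (log2_div_le n_gt0 k_gt0); nra.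
Qed.
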